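(* Let $\Lambda$ be a $d$-partition of $\{1,\dots,N\}$ and let $r^{(n)}_N(x,z)=\mathbb P^\circ(X_N(n)=z\mid X_N(0)=x)$ denote the $n$-step transition probabilities of the associated lumped chain. (i) For all $0<n\le N$, all $x\in\mathcal S_d$ and all $z\in\Gamma_{N,d}$ with $\mathrm{dist}(x,z)=n$, $$r^{(n)}_N(x,z)=\frac{n!}{N^n}\frac{\mathbb Q_N(z)}{\mathbb Q_N(x)}.$$ (ii) Let $n\ge0$, let $m\ge1$ be such that $p=(n+2-m)/2$ is a nonnegative integer. Then for all $x\in\mathcal S_d$ and all $z\in\Gamma_{N,d}$ with $\mathrm{dist}(x,z)=m$, $$r^{(n+2)}_N(x,z)\le r^{(m)}_N(x,z)\frac1{N^p}\frac{(m+2p)!}{m!\,p!}.$$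
   Context: Let $(\sigma_N(t))$ be the discrete-time simple random walk on $\{-1,1\}^N$ (jump to each Hamming neighbour with probability $1/N$). For a partition $\Lambda$ of $\{1,\dots,N\}$ into nonempty classes $\Lambda_1,\dots,\Lambda_d$, let $\gamma_k(\sigma)=|\Lambda_k|^{-1}\sum_{i\in\Lambda_k}\sigma_i$, $\gamma=(\gamma_1,\dots,\gamma_d)$, $\Gamma_{N,d}=\gamma(\{-1,1\}^N)$, $\mathcal S_d=\{-1,1\}^d$. The lumped chain $X_N(t)=\gamma(\sigma_N(t))$ is a Markov chain on $\Gamma_{N,d}$ with transition probabilities $r_N(x,x+s\frac2{|\Lambda_k|}u_k)=\frac{|\Lambda_k|}N\frac{1-sx_k}2$ ($s=\pm1$, $u_k$ canonical basis) and reversible measure $\mathbb Q_N(x)=2^{-N}\prod_k\binom{|\Lambda_k|}{|\Lambda_k|(1+x_k)/2}$. $\mathrm{dist}(x,y)=\sum_k\frac{|\Lambda_k|}2|x_k-y_k|$. *)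

From mathcomp Require Import all_boot all_order all_algebra.
Set Implicit Arguments. Unset Strict Implicit. Unset Printing Implicit Defensive.
Import Order.TTheory GRing.Theory Num.Theory.
Local Open Scope ring_scope.

(* A d-partition Lambda of {1..N} is encoded by lam : 'I_N -> 'I_d,
   Lambda_k = lam^{-1}(k) (nonemptiness is a hypothesis of the theorem).
   Spins sigma in {-1,1}^N are {ffun 'I_N -> bool} (true = +1). *)

Section Lumped.
Variables (R : archiRealFieldType) (N d : nat) (lam : 'I_N -> 'I_d).

Definition spin (b : bool) : R := if b then 1 else -1.

Definition cls (k : 'I_d) : nat := #|[set i | lam i == k]|.

Definition gamma (sigma : {ffun 'I_N -> bool}) : {ffun 'I_d -> R} :=
  [ffun k => (cls k)%:R^-1 * \sum_(i | lam i == k) spin (sigma i)].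

Definition GammaNd : seq {ffun 'I_d -> R} :=
  undup [seq gamma s | s <- enum {: {ffun 'I_N -> bool}}].

Definition inSd (x : {ffun 'I_d -> R}) : bool :=
  [forall k, (x k == 1) || (x k == -1)].

Definition shift (x : {ffun 'I_d -> R}) (k : 'I_d) (c : R) : {ffun 'I_d -> R} :=
  [ffun j => x j + (if j == k then c else 0)].

Definition rN (x y : {ffun 'I_d -> R}) : R :=
  \sum_(k < d) \sum_(b : bool)
     if y == shift x k (spin b * (2 / (cls k)%:R))
     then (cls k)%:R / N%:R * ((1 - spin b * x k) / 2) else 0.

Fixpoint rNn (n : nat) (x z : {ffun 'I_d -> R}) : R :=
  match n with
  | 0 => (x == z)%:R
  | n'.+1 => \sum_(y <- GammaNd) rN x y * rNn n' y z
  end.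

Definition QN (x : {ffun 'I_d -> R}) : R :=
  (2%:R ^+ N)^-1 *
  \prod_(k < d) ('C(cls k, Num.truncn ((cls k)%:R * (1 + x k) / 2)))%:R.

Definition distN (x y : {ffun 'I_d -> R}) : R :=
  \sum_(k < d) (cls k)%:R / 2 * `|x k - y k|.

End Lumped.

From mathcomp Require Import all_boot all_order all_algebra.
From mathcomp Require Import ring lra zify.
Import Order.TTheory GRing.Theory Num.Theory.
Local Open Scope ring_scope.
Set Implicit Arguments. Unset Strict Implicit. Unset Printing Implicit Defensive.

(* Fix a corner x of the cube S_d and encode z in Gamma_{N,d} by the numbers
   a_k(z) = |Lambda_k| (1 - x_k z_k) / 2 ([nflip]) of spins of class k that
   disagree with x.  Then dist(x,z) = sum_k a_k(z) and
   2^N Q_N(z) = prod_k C(|Lambda_k|, a_k(z)) =: C(z) ([cweight]).  A step of the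
   chain changes a single a_k by one, so the backward equation writes
   r^(t+1)(x,z) as a sum over the 2d predecessors of z, and the identity
   (a+1) C(L, a+1) = (L - a) C(L, a) turns each transition probability into a
   ratio of C-weights.  Consequently r^(t)(x,z) = 0 for t < dist(x,z) and
   r^(t)(x,z) = t!/N^t C(z) for t = dist(x,z), while induction on t = m + 2p
   gives r^(t)(x,z) <= t!/(p! N^(m+p)) C(z) when dist(x,z) = m; the inductive
   step only uses sum_k (|Lambda_k| - a_k) <= N and p + m <= m + 2p. *)

Lemma sum_pred1_seq (T : eqType) (V : nmodType) (s : seq T) (a : T) (F : T -> V) :
  uniq s -> \sum_(y <- s) (if y == a then F y else 0) = if a \in s then F a else 0.
Proof.
move=> s_uniq; rewrite -big_mkcond -big_filter /=; case: ifP => [a_s | a_notin_s].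
  by rewrite filter_pred1_uniq // big_seq1.
rewrite big1_seq // => y /=; rewrite mem_filter => /andP[/eqP-> a_s].
by rewrite a_s in a_notin_s.
Qed.

Lemma sum_incr_at (I : finType) (f g : I -> nat) (k : I) :
  (forall j, j != k -> g j = f j) -> g k = (f k).+1 ->
  (\sum_j g j = (\sum_j f j).+1)%N.
Proof.
move=> gf gk; rewrite (bigD1 k) // [in RHS](bigD1 k) //= gk (eq_bigr f) // => j /gf.
Qed.

Lemma prod_bin_incr_at (I : finType) (n f g : I -> nat) (k : I) :
  (forall j, j != k -> g j = f j) -> g k = (f k).+1 ->
  (\prod_j 'C(n j, g j) * g k = \prod_j 'C(n j, f j) * (n k - f k))%N.
Proof.
move=> gf gk; rewrite (bigD1 k) // [in RHS](bigD1 k) //=.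
rewrite (eq_bigr (fun j => 'C(n j, f j))); last by move=> j /gf ->.
by rewrite mulnAC gk [X in (X * _)%N]mulnC mul_bin_left -mulnA mulnC.
Qed.

Definition walk_bound (R : numFieldType) (N t m p : nat) : R :=
  t`!%:R / (p`!%:R * N%:R ^+ (m + p)).

Section WalkBound.
Variables (R : numFieldType) (N : nat).
Local Notation B := (walk_bound R N).

Lemma walk_bound_ge0 t m p : 0 <= B t m p.
Proof. by rewrite divr_ge0 // mulr_ge0 // exprn_ge0. Qed.

Lemma walk_boundS t m p : B t.+1 m p = t.+1%:R * B t m p.
Proof. by rewrite /walk_bound factS natrM mulrA. Qed.

Lemma walk_boundSm t m p : N%:R != 0 :> R -> B t m p = N%:R * B t m.+1 p.
Proof.
move=> N_neq0; rewrite /walk_bound addSn exprS.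
have fact0 : p`!%:R != 0 :> R by rewrite pnatr_eq0 -lt0n fact_gt0.
by field; rewrite fact0 N_neq0 expf_neq0.
Qed.

Lemma walk_boundSmp t m p : B t m.+1 p = p.+1%:R * B t m p.+1.
Proof.
rewrite /walk_bound addSn addnS factS natrM -mulrA [in RHS]mulrCA; congr (_ * _).
by rewrite [in RHS]invfM mulVKf ?pnatr_eq0.
Qed.
End WalkBound.

Section Transitions.
Variables (R : archiRealFieldType) (N d : nat) (lam : 'I_N -> 'I_d).
Local Notation L k := (cls lam k).
Local Notation sp := (spin R).
Local Notation Gamma := (GammaNd R lam).
Local Notation point := {ffun 'I_d -> R}.

Lemma GammaNd_uniq : uniq Gamma.
Proof. exact: undup_uniq. Qed.

Lemma gamma_in_GammaNd s : gamma R lam s \in Gamma.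
Proof. by rewrite mem_undup; apply: map_f; rewrite mem_enum. Qed.

Lemma GammaNdP z : z \in Gamma -> exists s, z = gamma R lam s.
Proof. by rewrite mem_undup => /mapP[s _ ->]; exists s. Qed.

Lemma rNnSr t (y z : point) : y \in Gamma -> z \in Gamma ->
  rNn lam t.+1 y z = \sum_(w <- Gamma) rNn lam t y w * rN lam w z.
Proof.
elim: t y => [|t IHt] y yG zG.
  rewrite /= (bigD1_seq z) ?GammaNd_uniq //= eqxx mulr1 big1 ?addr0; last first.
    by move=> w /negbTE->; rewrite mulr0.
  rewrite (bigD1_seq y) ?GammaNd_uniq //= eqxx mul1r big1 ?addr0 //.
  by move=> w; rewrite eq_sym => /negbTE->; rewrite mul0r.
have -> : rNn lam t.+2 y z = \sum_(y' <- Gamma) rN lam y y' * rNn lam t.+1 y' z by [].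
under eq_big_seq => y' y'G do rewrite IHt // mulr_sumr.
rewrite exchange_big; apply: eq_bigr => w _ /=.
by rewrite mulr_suml; apply: eq_bigr => y' _; rewrite mulrA.
Qed.

Lemma shiftK (y : point) k c : shift (shift y k c) k (- c) = y.
Proof. by apply/ffunP => j; rewrite !ffunE; case: (j == k); rewrite ?addr0 ?addrK. Qed.

Lemma eq_shift (y z : point) k c : (z == shift y k c) = (y == shift z k (- c)).
Proof.
apply/eqP/eqP => [->|->]; first by rewrite shiftK.
by rewrite -{2}(opprK c) shiftK.
Qed.

(* The move (k, b) sets a spin of class k to b: [pmove k b y] is its probability
   from y, and [prev z k b] is the point from which it leads to z. *)
Definition pmove k b (y : point) : R := (L k)%:R / N%:R * ((1 - sp b * y k) / 2).

Definition prev (z : point) k b : point := shift z k (- (sp b * (2 / (L k)%:R))).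

Definition inflow (f : point -> R) z k b : R :=
  if prev z k b \in Gamma then f (prev z k b) * pmove k b (prev z k b) else 0.

Lemma sum_rN_inflow (f : point -> R) z :
  \sum_(y <- Gamma) f y * rN lam y z = \sum_k \sum_b inflow f z k b.
Proof.
under eq_bigr do rewrite mulr_sumr.
rewrite exchange_big /=; apply: eq_bigr => k _.
under eq_bigr do rewrite mulr_sumr.
rewrite exchange_big /=; apply: eq_bigr => b _.
rewrite /inflow -(sum_pred1_seq _ (fun y => f y * pmove k b y)) ?GammaNd_uniq //.
by apply: eq_bigr => y _; rewrite eq_shift -/(prev z k b); case: ifP; rewrite ?mulr0.
Qed.

Definition nplus (s : {ffun 'I_N -> bool}) k := (\sum_(i | lam i == k) s i)%N.

Lemma nplus_le s k : (nplus s k <= L k)%N.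
Proof. by rewrite /cls cardsE -sum1_card leq_sum // => i _; apply: leq_b1. Qed.

Lemma cls_le k : (L k <= N)%N.
Proof. by rewrite -[N in (_ <= N)%N]card_ord max_card. Qed.

Lemma sum_cls : (\sum_k L k)%N = N.
Proof.
rewrite -[N in RHS]card_ord -sum1_card (partition_big lam xpredT) //=.
by apply: eq_bigr => k _; rewrite /cls -sum1_card; apply: eq_bigl => i; rewrite inE.
Qed.

Lemma spinN b : sp (~~ b) = - sp b.
Proof. by case: b; rewrite /= ?opprK. Qed.

Lemma spinE b : sp b = 2 * (b : nat)%:R - 1.
Proof. by case: b => /=; rewrite ?mulr1 ?mulr0; lra. Qed.

Lemma sum_cls_const (c : R) k : \sum_(i | lam i == k) c = (L k)%:R * c.
Proof. by rewrite sumr_const /cls cardsE mulr_natl. Qed.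

Lemma gammaE s k : gamma R lam s k = (2 * (nplus s k)%:R - (L k)%:R) / (L k)%:R.
Proof.
rewrite /gamma ffunE mulrC; congr (_ / _).
under eq_bigr do rewrite spinE.
by rewrite sumrB -mulr_sumr sum_cls_const mulr1 /nplus natr_sum.
Qed.

Definition flip (s : {ffun 'I_N -> bool}) i := [ffun j => (j == i) (+) s j].

Lemma gamma_flip s i : gamma R lam (flip s i) = prev (gamma R lam s) (lam i) (s i).
Proof.
apply/ffunP => k; rewrite /prev /shift !ffunE.
have [->|k_ne] := eqVneq k (lam i).
  rewrite (bigD1 i) //= [in RHS](bigD1 i) //= ffunE eqxx.
  rewrite (eq_bigr (fun j => sp (s j))); last by move=> j /andP[_ /negbTE ji]; rewrite ffunE ji.
  by case: (s i) => /=; ring.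
rewrite addr0; congr (_ * _); apply: eq_bigr => j /eqP jk.
by rewrite ffunE; case: eqP => // ji; rewrite -jk ji eqxx in k_ne.
Qed.

End Transitions.

Lemma sum_bool_split (V : nmodType) (F : bool -> V) b : \sum_c F c = F b + F (~~ b).
Proof. by rewrite big_bool; case: b => //=; rewrite addrC. Qed.

Section Corner.
Variables (R : archiRealFieldType) (N d : nat) (lam : 'I_N -> 'I_d).
Hypothesis lam_onto : forall k : 'I_d, exists i : 'I_N, lam i = k.
Local Notation L k := (cls lam k).
Local Notation sp := (spin R).
Local Notation Gamma := (GammaNd R lam).
Local Notation point := {ffun 'I_d -> R}.
Local Notation prev := (prev lam).
Local Notation pmove := (pmove lam).
Local Notation inflow := (inflow lam).

Lemma cls_gt0 k : (0 < L k)%N.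
Proof. by have [i <-] := lam_onto k; apply/card_gt0P; exists i; rewrite inE. Qed.

Lemma cls_neq0 k : (L k)%:R != 0 :> R.
Proof. by rewrite pnatr_eq0 -lt0n cls_gt0. Qed.

Lemma N_gt0 (k : 'I_d) : (0 < N)%N.
Proof. exact: leq_trans (cls_gt0 k) (cls_le lam k). Qed.

Lemma gamma_const (s : {ffun 'I_N -> bool}) k c :
  (forall i, lam i = k -> sp (s i) = c) -> gamma R lam s k = c.
Proof.
move=> s_c; rewrite /gamma ffunE (eq_bigr (fun _ => c)); last by move=> i /eqP/s_c.
by rewrite sum_cls_const mulKf ?cls_neq0.
Qed.

Lemma GammaNd_coord z k : z \in Gamma ->
  exists2 c, (c <= L k)%N & z k = (2 * c%:R - (L k)%:R) / (L k)%:R.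
Proof. by move=> /GammaNdP[s ->]; exists (nplus lam s k); rewrite ?nplus_le ?gammaE. Qed.

Variables (x : point) (x_corner : inSd x).

Lemma corner_coord k : x k = 1 \/ x k = -1.
Proof. by move/forallP: x_corner => /(_ k) /orP[/eqP|/eqP]; [left|right]. Qed.

Lemma corner_sqr k : x k * x k = 1.
Proof. by case: (corner_coord k) => ->; rewrite ?mulrNN mulr1. Qed.

Lemma spin_corner k b : sp b = x k \/ sp b = - x k.
Proof. by case: b (corner_coord k) => /= [] [] ->; rewrite ?opprK; auto. Qed.

Lemma exists_spin_out k : exists b, sp b = x k.
Proof. by case: (corner_coord k) => ->; [exists true | exists false]. Qed.

Lemma corner_in_GammaNd : x \in Gamma.
Proof.
suff -> : x = gamma R lam [ffun i => x (lam i) == 1] by apply: gamma_in_GammaNd.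
apply/ffunP => k; symmetry; apply: gamma_const => i <-; rewrite ffunE.
by case: (corner_coord (lam i)) => ->; rewrite ?eqxx // (_ : -1 == 1 = false) //; apply/eqP; lra.
Qed.

Definition nflip (z : point) k := Num.truncn ((L k)%:R * (1 - x k * z k) / 2).

Definition ndist z := (\sum_k nflip z k)%N.

Definition cweight z := (\prod_k 'C(L k, nflip z k))%N.

Lemma GammaNd_flips z k : z \in Gamma ->
  exists2 n, (n <= L k)%N &
    (L k)%:R * (1 - x k * z k) / 2 = n%:R /\
    'C(L k, Num.truncn ((L k)%:R * (1 + z k) / 2)) = 'C(L k, n).
Proof.
move=> /(GammaNd_coord k)[c c_le ->]; have L0 := cls_neq0 k.
have -> : (L k)%:R * (1 + (2 * c%:R - (L k)%:R) / (L k)%:R) / 2 = c%:R :> R by field.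
rewrite natrK; case: (corner_coord k) => ->.
  by exists (L k - c)%N; rewrite ?leq_subr ?bin_sub // natrB //; split => //; field.
by exists c => //; split => //; field.
Qed.

Lemma nflipE z k : z \in Gamma -> (nflip z k)%:R = (L k)%:R * (1 - x k * z k) / 2.
Proof. by case/(GammaNd_flips k) => n _ [e _]; rewrite /nflip e natrK. Qed.

Lemma nflip_le z k : z \in Gamma -> (nflip z k <= L k)%N.
Proof. by case/(GammaNd_flips k) => n n_le [e _]; rewrite /nflip e natrK. Qed.

Lemma bin_nflip z k : z \in Gamma ->
  'C(L k, Num.truncn ((L k)%:R * (1 + z k) / 2)) = 'C(L k, nflip z k).
Proof. by case/(GammaNd_flips k) => n _ [e ->]; rewrite /nflip e natrK. Qed.

Lemma nflip_corner k : nflip x k = 0%N.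
Proof. by rewrite /nflip corner_sqr subrr mulr0 mul0r truncn0. Qed.

Lemma ndist_corner : ndist x = 0%N.
Proof. by rewrite /ndist big1 // => k _; rewrite nflip_corner. Qed.

Lemma cweight_corner : cweight x = 1%N.
Proof. by rewrite /cweight big1 // => k _; rewrite nflip_corner bin0. Qed.

Lemma QN_cweight z : z \in Gamma -> QN lam z = (2%:R ^+ N)^-1 * (cweight z)%:R.
Proof.
move=> zG; rewrite /QN /cweight natr_prod; congr (_ * _).
by apply: eq_bigr => k _; rewrite bin_nflip.
Qed.

Lemma distN_ndist z : z \in Gamma -> distN lam x z = (ndist z)%:R.
Proof.
move=> zG; rewrite /distN /ndist natr_sum; apply: eq_bigr => k _.
have x_abs : `|x k| = 1 by case: (corner_coord k) => ->; rewrite ?normrN normr1.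
have -> : x k - z k = x k * (1 - x k * z k) by rewrite mulrBr mulr1 mulrA corner_sqr mul1r.
have flips_ge0 : 0 <= 1 - x k * z k.
  have : 0 <= (nflip z k)%:R :> R by [].
  by rewrite nflipE // pmulr_lge0 ?invr_gt0 // pmulr_rge0 // ltr0n cls_gt0.
by rewrite (normrM (x k)) x_abs mul1r (ger0_norm flips_ge0) nflipE // mulrAC.
Qed.

Lemma ndist_le z : z \in Gamma -> (ndist z <= N)%N.
Proof.
by move=> zG; rewrite -(sum_cls lam) leq_sum // => k _; apply: nflip_le.
Qed.

Lemma ndist_eq0 z : z \in Gamma -> ndist z = 0%N -> z = x.
Proof.
move=> zG /eqP; rewrite sum_nat_eq0 => /forallP z_x; apply/ffunP => k.
have flips0 : 1 - x k * z k = 0.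
  have /eqP nflip0 := z_x k; apply/eqP; have := nflipE k zG.
  rewrite nflip0 => /esym/eqP.
  by rewrite !mulf_eq0 invr_eq0 !pnatr_eq0 eqn0Ngt cls_gt0 /= orbF.
by rewrite -[z k]mul1r -(corner_sqr k) -mulrA -(subr0_eq flips0) mulr1.
Qed.

Lemma nflip_prev_neq z k b j : j != k -> nflip (prev z k b) j = nflip z j.
Proof. by move=> jk; rewrite /nflip /prev /shift ffunE (negbTE jk) addr0. Qed.

Lemma nflip_prev z k b : z \in Gamma -> prev z k b \in Gamma ->
  (nflip (prev z k b) k)%:R = (nflip z k)%:R + x k * sp b :> R.
Proof.
move=> zG wG; rewrite !nflipE // /prev /shift ffunE eqxx.
by have L0 := cls_neq0 k; field.
Qed.

Lemma nflip_prev_out z k b : z \in Gamma -> prev z k b \in Gamma -> sp b = x k ->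
  nflip (prev z k b) k = (nflip z k).+1.
Proof.
move=> zG wG b_out; apply/eqP.
by rewrite -(eqr_nat R) nflip_prev // b_out corner_sqr -addn1 natrD.
Qed.

Lemma nflip_prev_in z k b : z \in Gamma -> prev z k b \in Gamma -> sp b = - x k ->
  (nflip (prev z k b) k).+1 = nflip z k.
Proof.
move=> zG wG b_in; apply/eqP.
by rewrite -(eqr_nat R) -addn1 natrD nflip_prev // b_in mulrN corner_sqr addrNK.
Qed.

Lemma ndist_prev_out z k b : z \in Gamma -> prev z k b \in Gamma -> sp b = x k ->
  ndist (prev z k b) = (ndist z).+1.
Proof.
move=> zG wG b_out; apply: (sum_incr_at (k := k)); last exact: nflip_prev_out.
exact: nflip_prev_neq.
Qed.

Lemma ndist_prev_in z k b : z \in Gamma -> prev z k b \in Gamma -> sp b = - x k ->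
  (ndist (prev z k b)).+1 = ndist z.
Proof.
move=> zG wG b_in; symmetry; apply: (sum_incr_at (k := k)); last exact: esym (nflip_prev_in _ _ _).
by move=> j /nflip_prev_neq ->.
Qed.

Lemma ndist_le_prev z k b : z \in Gamma -> prev z k b \in Gamma ->
  (ndist z <= (ndist (prev z k b)).+1)%N.
Proof.
move=> zG wG; case: (spin_corner k b) => [b_out|b_in].
  by rewrite ndist_prev_out // leqW.
by rewrite ndist_prev_in.
Qed.

Lemma pmove_out w k b : w \in Gamma -> sp b = x k -> pmove k b w = (nflip w k)%:R / N%:R.
Proof. by move=> wG b_out; rewrite nflipE // /pmove b_out; ring. Qed.

Lemma pmove_in w k b : w \in Gamma -> sp b = - x k ->
  pmove k b w = (L k - nflip w k)%:R / N%:R.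
Proof.
move=> wG b_in; rewrite natrB ?nflip_le // nflipE // /pmove b_in.
have -> : (L k)%:R - (L k)%:R * (1 - x k * w k) / 2 = (L k)%:R * (1 + x k * w k) / 2 :> R.
  by field.
by ring.
Qed.


Lemma cweight_pmove_out z k b : z \in Gamma -> prev z k b \in Gamma -> sp b = x k ->
  (cweight (prev z k b))%:R * pmove k b (prev z k b)
    = (cweight z * (L k - nflip z k))%:R / N%:R.
Proof.
move=> zG wG b_out; rewrite pmove_out // mulrA -natrM /cweight.
rewrite (@prod_bin_incr_at _ _ (nflip z) _ k) //; last exact: nflip_prev_out.
exact: nflip_prev_neq.
Qed.

Lemma cweight_pmove_in z k b : z \in Gamma -> prev z k b \in Gamma -> sp b = - x k ->
  (cweight (prev z k b))%:R * pmove k b (prev z k b) = (cweight z * nflip z k)%:R / N%:R.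
Proof.
move=> zG wG b_in; rewrite pmove_in // mulrA -natrM /cweight.
rewrite -(@prod_bin_incr_at _ _ _ (nflip z) k) //; last exact: esym (nflip_prev_in _ _ _).
by move=> j /nflip_prev_neq ->.
Qed.

Lemma prev_in_GammaNd z k b : z \in Gamma -> sp b = - x k -> (0 < nflip z k)%N ->
  prev z k b \in Gamma.
Proof.
move=> /GammaNdP[s ->] b_in flips_gt0.
case: (pickP (fun i => (lam i == k) && (s i == b))) => [i /andP[/eqP <- /eqP <-] | no_b].
  by rewrite -gamma_flip gamma_in_GammaNd.
suff s_k : gamma R lam s k = x k.
  by move: flips_gt0; rewrite /nflip s_k corner_sqr subrr mulr0 mul0r truncn0.
apply: gamma_const => i lik; have := no_b i; rewrite lik eqxx /= => si_b.
have -> : s i = ~~ b by case: (s i) (b) si_b => [] [].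
by rewrite spinN b_in opprK.
Qed.

Lemma inflow_out_le (f : point -> R) c z k b : z \in Gamma -> sp b = x k -> 0 <= c ->
  (forall w, w \in Gamma -> ndist w = (ndist z).+1 -> f w <= c * (cweight w)%:R) ->
  inflow f z k b <= c * (cweight z * (L k - nflip z k))%:R / N%:R.
Proof.
move=> zG b_out c_ge0 f_le; rewrite /inflow -[X in _ <= X]mulrA.
case: ifP => [wG|_]; last by rewrite mulr_ge0 ?divr_ge0.
rewrite -(cweight_pmove_out zG wG b_out) [X in _ <= X]mulrA ler_wpM2r ?f_le ?ndist_prev_out //.
by rewrite pmove_out ?divr_ge0.
Qed.

Lemma inflow_in_le (f : point -> R) c z k b : z \in Gamma -> sp b = - x k -> 0 <= c ->
  (forall w, w \in Gamma -> (ndist w).+1 = ndist z -> f w <= c * (cweight w)%:R) ->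
  inflow f z k b <= c * (cweight z * nflip z k)%:R / N%:R.
Proof.
move=> zG b_in c_ge0 f_le; rewrite /inflow -[X in _ <= X]mulrA.
case: ifP => [wG|_]; last by rewrite mulr_ge0 ?divr_ge0.
rewrite -(cweight_pmove_in zG wG b_in) [X in _ <= X]mulrA ler_wpM2r ?f_le ?ndist_prev_in //.
by rewrite pmove_in ?divr_ge0.
Qed.

Lemma inflow_in (f : point -> R) c z k b : z \in Gamma -> sp b = - x k ->
  (forall w, w \in Gamma -> (ndist w).+1 = ndist z -> f w = c * (cweight w)%:R) ->
  inflow f z k b = c * (cweight z * nflip z k)%:R / N%:R.
Proof.
move=> zG b_in f_eq; rewrite /inflow -[in RHS]mulrA; case: ifP => [wG|w_notin].
  by rewrite f_eq ?ndist_prev_in // -mulrA cweight_pmove_in.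
suff -> : nflip z k = 0%N by rewrite muln0 mul0r mulr0.
by apply/eqP; rewrite -leqn0 leqNgt; exact: contraFN (prev_in_GammaNd zG b_in) w_notin.
Qed.

Lemma rNn_gt_ndist t z : z \in Gamma -> (t < ndist z)%N -> rNn lam t x z = 0.
Proof.
elim: t z => [|t IHt] z zG t_lt.
  by rewrite /=; case: eqP => // xz; move: t_lt; rewrite -xz ndist_corner.
rewrite rNnSr ?corner_in_GammaNd // sum_rN_inflow big1 // => k _.
rewrite big1 // => b _; rewrite /inflow; case: ifP => // wG.
by rewrite IHt ?mul0r //; apply: leq_trans t_lt (ndist_le_prev zG wG).
Qed.

Lemma rNn_ndist t z : z \in Gamma -> ndist z = t ->
  rNn lam t x z = t`!%:R / N%:R ^+ t * (cweight z)%:R.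
Proof.
elim: t z => [|t IHt] z zG zt.
  by rewrite (ndist_eq0 zG zt) /= eqxx cweight_corner expr0 divr1 mulr1.
rewrite rNnSr ?corner_in_GammaNd // sum_rN_inflow.
transitivity (\sum_k (t`!%:R / N%:R ^+ t * (cweight z * nflip z k)%:R / N%:R : R)).
  apply: eq_bigr => k _; have [b b_out] := exists_spin_out k.
  have b_in : sp (~~ b) = - x k by rewrite spinN b_out.
  rewrite (sum_bool_split _ b) (inflow_in (c := t`!%:R / N%:R ^+ t) zG b_in); last first.
    by move=> w wG; rewrite zt => -[/IHt]; apply.
  rewrite /inflow; case: ifP => [wG|_]; last by rewrite add0r.
  by rewrite rNn_gt_ndist ?mul0r ?add0r // ndist_prev_out // zt.
rewrite -mulr_suml -mulr_sumr -natr_sum -big_distrr /= -/(ndist z) zt.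
by rewrite factS exprS invfM !natrM; ring.
Qed.

Definition rNn_bounded t := forall m p w, t = (m + 2 * p)%N -> w \in Gamma -> ndist w = m ->
  rNn lam t x w <= walk_bound R N t m p * (cweight w)%:R.

Lemma sum_inflow_le t m p z k : rNn_bounded t -> t.+1 = (m + 2 * p)%N ->
  z \in Gamma -> ndist z = m ->
  \sum_b inflow (rNn lam t x) z k b
    <= walk_bound R N t m p * (cweight z * (p * (L k - nflip z k) + N * nflip z k))%:R / N%:R.
Proof.
move=> IHt tE zG zm; have N_neq0 : N%:R != 0 :> R by rewrite pnatr_eq0 -lt0n (N_gt0 k).
have [b b_out] := exists_spin_out k; have b_in : sp (~~ b) = - x k by rewrite spinN b_out.
have K_ge0 := walk_bound_ge0 R N t m p.
rewrite (sum_bool_split _ b) [X in _ <= X](_ : _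
    = p%:R * walk_bound R N t m p * (cweight z * (L k - nflip z k))%:R / N%:R
      + N%:R * walk_bound R N t m p * (cweight z * nflip z k)%:R / N%:R); last first.
  by rewrite !(natrM, natrD); ring.
apply: lerD.
  apply: (inflow_out_le zG b_out) => [|w wG]; first by rewrite mulr_ge0.
  rewrite zm; case: p tE {K_ge0} => [|p] tE wm.
    by rewrite rNn_gt_ndist ?mul0r // wm; lia.
  by rewrite -walk_boundSmp; apply: IHt => //; lia.
apply: (inflow_in_le zG b_in) => [|w wG]; first by rewrite mulr_ge0.
rewrite zm => wm; rewrite -wm -walk_boundSm //; apply: IHt => //; lia.
Qed.

Lemma rNn_le_walk_bound t : rNn_bounded t.
Proof.
elim: t => [|t IHt] m p z tE zG zm.
  have [m0 p0] : m = 0%N /\ p = 0%N by lia.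
  rewrite (ndist_eq0 zG) ?zm // cweight_corner /= eqxx m0 p0.
  by rewrite /walk_bound /= expr0 !mulr1 divr1.
rewrite rNnSr ?corner_in_GammaNd // sum_rN_inflow.
apply: le_trans (ler_sum _ (fun k _ => sum_inflow_le k IHt tE zG zm)) _.
rewrite -mulr_suml -mulr_sumr -natr_sum -big_distrr /= big_split /= -!big_distrr /=.
rewrite -/(ndist z) zm walk_boundS.
have flips_le : (p * \sum_k (L k - nflip z k) + N * m <= N * t.+1)%N.
  have : (\sum_k (L k - nflip z k) <= N)%N.
    by rewrite -[X in (_ <= X)%N](sum_cls lam) leq_sum // => k _; apply: leq_subr.
  nia.
have [N0|N_pos] := posnP N.
  have -> : (N%:R : R)^-1 = 0 by rewrite N0 invr0.
  by rewrite mulr0; apply: mulr_ge0 => //; apply: mulr_ge0 => //; apply: walk_bound_ge0.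
have -> : t.+1%:R * walk_bound R N t m p * (cweight z)%:R
    = walk_bound R N t m p * (cweight z * (N * t.+1))%:R / N%:R.
  have N_neq0 : N%:R != 0 :> R by rewrite pnatr_eq0 -lt0n.
  by rewrite !natrM; field.
by rewrite ler_wpM2r ?invr_ge0 // ler_wpM2l ?walk_bound_ge0 // ler_nat leq_mul2l flips_le orbT.
Qed.

Lemma ndist_distN z n : z \in Gamma -> distN lam x z = n%:R -> ndist z = n.
Proof. by move=> zG; rewrite distN_ndist // => /eqP; rewrite eqr_nat => /eqP. Qed.

Lemma rNn_distN n z : z \in Gamma -> distN lam x z = n%:R ->
  rNn lam n x z = n`!%:R / N%:R ^+ n * (QN lam z / QN lam x).
Proof.
move=> zG /(ndist_distN zG) zn.
rewrite rNn_ndist // !QN_cweight ?corner_in_GammaNd // cweight_corner mulr1.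
by congr (_ * _); field; rewrite expf_neq0 // pnatr_eq0.
Qed.

Lemma rNn_distN_le n m p z : (1 <= m)%N -> (n + 2 = m + 2 * p)%N ->
  z \in Gamma -> distN lam x z = m%:R ->
  rNn lam n.+2 x z
    <= rNn lam m x z * (N%:R ^+ p)^-1 * ((m + 2 * p)`!)%:R / ((m`!)%:R * (p`!)%:R).
Proof.
move=> m_gt0 nE zG /(ndist_distN zG) zm.
have N_pos : (0 < N)%N by rewrite (leq_trans m_gt0) // -zm ndist_le.
have fact_neq0 k : k`!%:R != 0 :> R by rewrite pnatr_eq0 -lt0n fact_gt0.
rewrite -addn2 nE (rNn_ndist zG zm).
rewrite [X in _ <= X](_ : _ = walk_bound R N (m + 2 * p) m p * (cweight z)%:R).
  exact: rNn_le_walk_bound.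
by rewrite /walk_bound exprD; field; rewrite !fact_neq0 !expf_neq0 // pnatr_eq0 -lt0n.
Qed.

End Corner.

Theorem lemma3p13 (R : archiRealFieldType) (N d : nat) (lam : 'I_N -> 'I_d)
  (Hpart : forall k : 'I_d, exists i : 'I_N, lam i = k) :
  (forall (n : nat), (0 < n <= N)%N ->
     forall x z : {ffun 'I_d -> R},
       inSd x -> z \in GammaNd R lam -> distN lam x z = n%:R ->
       rNn lam n x z
         = (n`!)%:R / (N%:R ^+ n) * (QN lam z / QN lam x))
  /\
  (forall (n m p : nat), (1 <= m)%N -> (n + 2 = m + 2 * p)%N ->
     forall x z : {ffun 'I_d -> R},
       inSd x -> z \in GammaNd R lam -> distN lam x z = m%:R ->
       rNn lam n.+2 x z
         <= rNn lam m x z * (N%:R ^+ p)^-1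
              * ((m + 2 * p)`!)%:R / ((m`!)%:R * (p`!)%:R)).
Proof.
split=> [n _ x z x_corner | n m p m_gt0 nE x z x_corner].
  exact: rNn_distN.
exact: rNn_distN_le.
Qed.
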